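(* Let $A=(a_{ij})\in M(m,\mathbb{C})$ and let $X_A$ be a complex algebra spanned by elements $\{x_{ij}:i,j=1,\ldots,m\}$ satisfying $x_{ij}x_{kl}=a_{jk}x_{il}$. If $X_A$ is semisimple and $\det A=0$, then the elements $\{x_{ij}:i,j=1,\ldots,m\}$ are linearly dependent. *)

(* The complex numbers are modelled as R[i] (mathcomp-real-closed
   complex.v) for R : realType (a complete archimedean ordered field, i.e. the reals). *)
From mathcomp Require Import all_boot all_algebra.
From mathcomp Require Import reals.
From mathcomp Require Export complex.
Set Implicit Arguments.
Unset Strict Implicit.
Unset Printing Implicit Defensive.
Import GRing.Theory Num.Theory.
Local Open Scope ring_scope.

Section AlgDefs.
Variables (K : fieldType) (V : lmodType K) (mul : V -> V -> V).

Definition is_assoc_algebra : Prop :=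
  [/\ forall a b c, mul a (b + c) = mul a b + mul a c,
      forall a b c, mul (a + b) c = mul a c + mul b c,
      forall (k : K) a b, mul (k *: a) b = k *: mul a b,
      forall (k : K) a b, mul a (k *: b) = k *: mul a b
    & forall a b c, mul a (mul b c) = mul (mul a b) c].

Definition is_ideal (I : V -> Prop) : Prop :=
  [/\ I 0,
      forall a b, I a -> I b -> I (a + b),
      forall (k : K) a, I a -> I (k *: a)
    & forall a b, I b -> I (mul a b) /\ I (mul b a)].

(* I is nilpotent: I^n = 0 for some n >= 1, i.e. every product of n+1 elements
   of I (equivalently, of n elements, up to reindexing) vanishes. *)
Definition is_nilpotent_set (I : V -> Prop) : Prop :=
  exists n : nat, forall (x : V) (s : seq V),
    I x -> (forall y, y \in s -> I y) -> size s = n -> foldl mul x s = 0.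

(* Semisimple (finite-dimensional setting): the algebra has no nonzero
   nilpotent two-sided ideal, i.e. its (Jacobson) radical is zero. *)
Definition semisimple_alg : Prop :=
  forall I : V -> Prop, is_ideal I -> is_nilpotent_set I ->
    forall v, I v -> v = 0.

End AlgDefs.

Definition spans_family (K : fieldType) (V : lmodType K) (m : nat)
    (x : 'I_m -> 'I_m -> V) : Prop :=
  forall v : V, exists c : 'I_m -> 'I_m -> K,
    v = \sum_(i < m) \sum_(j < m) c i j *: x i j.

Definition lin_dependent_family (K : fieldType) (V : lmodType K) (m : nat)
    (x : 'I_m -> 'I_m -> V) : Prop :=
  exists c : 'I_m -> 'I_m -> K,
    (exists i j, c i j != 0) /\ \sum_(i < m) \sum_(j < m) c i j *: x i j = 0.

From mathcomp Require Import all_boot all_algebra.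
From mathcomp Require Import reals.
From mathcomp Require Import complex.
Set Implicit Arguments.
Unset Strict Implicit.
Unset Printing Implicit Defensive.
Import GRing.Theory Num.Theory.
Local Open Scope ring_scope.
Local Open Scope complex_scope.

(* If [v A = 0] with [v <> 0] and [v_j0 <> 0], then [w = \sum_j v_j x_(j0 j)]
   satisfies [w x_(kl) = (v A)_k x_(j0 l) = 0], so [w] lies in the left
   annihilator of the algebra.  That annihilator is a two-sided ideal of square
   zero, hence [w = 0] by semisimplicity: a nontrivial linear relation. *)

Section LeftAnnihilator.
Variables (K : fieldType) (V : lmodType K) (mul : V -> V -> V).
Hypothesis mul_assoc_alg : is_assoc_algebra mul.

Definition left_annihilator (u : V) : Prop := forall a, mul u a = 0.

Lemma mul0a a : mul 0 a = 0.
Proof.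
case: mul_assoc_alg => _ mulDl _ _ _.
by apply: (addrI (mul 0 a)); rewrite -mulDl !addr0.
Qed.

Lemma mula0 a : mul a 0 = 0.
Proof.
case: mul_assoc_alg => mulDr _ _ _ _.
by apply: (addrI (mul a 0)); rewrite -mulDr !addr0.
Qed.

Lemma left_annihilator_ideal : is_ideal mul left_annihilator.
Proof.
case: mul_assoc_alg => _ mulDl mulZl _ mulA.
split=> [a | a b Ha Hb c | k a Ha c | a b Hb]; first exact: mul0a.
- by rewrite mulDl Ha Hb addr0.
- by rewrite mulZl Ha scaler0.
- by split=> c; rewrite -mulA Hb ?mula0.
Qed.

Lemma left_annihilator_nilpotent : is_nilpotent_set mul left_annihilator.
Proof. by exists 1%N => u [|a [|]] // Hu _ _; apply: Hu. Qed.

Lemma semisimple_left_annihilator_eq0 u :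
  semisimple_alg mul -> left_annihilator u -> u = 0.
Proof.
move=> ss; apply: ss; [exact: left_annihilator_ideal |].
exact: left_annihilator_nilpotent.
Qed.

Lemma left_annihilator_spanning m (x : 'I_m -> 'I_m -> V) u :
  spans_family x -> (forall k l, mul u (x k l) = 0) -> left_annihilator u.
Proof.
case: mul_assoc_alg => mulDr _ _ mulZr _.
move=> span ux a; have [c ->] := span a.
rewrite (big_morph (mul u) (mulDr u) (mula0 u)) big1 // => k _.
rewrite (big_morph (mul u) (mulDr u) (mula0 u)) big1 // => l _.
by rewrite mulZr ux scaler0.
Qed.

Lemma mul_row_comb_structure m (A : 'M[K]_m) (x : 'I_m -> 'I_m -> V)
    (v : 'rV[K]_m) j0 k l :
  (forall i j k l, mul (x i j) (x k l) = A j k *: x i l) ->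
  mul (\sum_j v 0 j *: x j0 j) (x k l) = (v *m A) 0 k *: x j0 l.
Proof.
move=> hx; case: mul_assoc_alg => _ mulDl mulZl _ _.
rewrite (big_morph (mul^~ (x k l)) (fun a b => mulDl a b _) (mul0a _)).
rewrite mxE scaler_suml.
by apply: eq_bigr => j _; rewrite mulZl hx scalerA.
Qed.

End LeftAnnihilator.

Lemma lin_dependent_row (K : fieldType) (V : lmodType K) m
    (x : 'I_m -> 'I_m -> V) (c : 'I_m -> K) i0 j0 :
  c j0 != 0 -> \sum_j c j *: x i0 j = 0 -> lin_dependent_family x.
Proof.
move=> cj0 rel; exists (fun i j => if i == i0 then c j else 0); split.
  by exists i0, j0; rewrite eqxx.
rewrite (bigD1 i0) //= eqxx rel add0r big1 // => i /negPf ->.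
by apply: big1 => j _; rewrite scale0r.
Qed.

Lemma row_neq0_coord (K : fieldType) m (v : 'rV[K]_m) :
  v != 0 -> exists j, v 0 j != 0.
Proof.
move=> vn0; apply/existsP; apply: contraR vn0 => /existsPn v0.
by apply/eqP/rowP => j; rewrite mxE; apply/eqP/negbNE.
Qed.

Theorem corollary33 (R : realType) (m : nat) (A : 'M[R[i]]_m)
    (V : lmodType R[i]) (mul : V -> V -> V) (x : 'I_m -> 'I_m -> V) :
  is_assoc_algebra mul ->
  spans_family x ->
  (forall i j k l, mul (x i j) (x k l) = A j k *: x i l) ->
  semisimple_alg mul ->
  \det A = 0 ->
  lin_dependent_family x.
Proof.
move=> alg span hx ss /eqP /det0P [v vn0 vA].
have [j0 vj0] := row_neq0_coord vn0.
apply: (lin_dependent_row (c := v 0) (i0 := j0) vj0).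
apply: (semisimple_left_annihilator_eq0 alg ss).
apply: (left_annihilator_spanning alg span) => k l.
by rewrite (mul_row_comb_structure alg v j0 k l hx) vA mxE scale0r.
Qed.
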